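(* If $a\ne 1$ and either $b\ne 0, c=0$ or $b=0, c\ne 0$, then $\check{f}$ has at most one root. Furthermore, exactly one of the following statements is true. 1. $\check{f}$ has exactly one root $x_0$ at which it changes sign. The derivative $\check{f}'$ is nonzero at $x_0$, and either $a>1,b>0,c=0$ or $a>1,b=0,c<0$ or $a<1,b<0,c=0$ or $a<1,b=0,c>0$. 2. $\check{f}$ has no root, and either $a<1,b>0,c=0$ or $a<1,b=0,c<0$ or $a>1,b<0,c=0$ or $a>1,b=0,c>0$.
   Context: A function $f:\mathbb{R}^+\to\mathbb{R}^+$ is called strongly hyperbolic if: (1) $\lim_{x\to 0+} f(x)=+\infty$ and $\lim_{x\to+\infty} f(x)=0$; (2) $f$ is strictly convex; (3) for each $b\in\mathbb{R}$, $\lim_{x\to+\infty} f(x+b)/f(x)=1$; (4) $f$ is differentiable; (5) $\ln|f'(x)|$ is strictly convex. Let $f$ be a strongly hyperbolic function, let $a>0$, $b,c\in\mathbb{R}$, and define $\check{f}:(\max\{-b,0\},\infty)\to\mathbb{R}$ by $\check{f}(x)=af(x+b)+c-f(x)$. *)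

From Stdlib Require Import Reals Lra.
From Coquelicot Require Import Coquelicot.
Open Scope R_scope.

Definition strictly_convex_pos (g : R -> R) : Prop :=
  forall x y t, 0 < x -> 0 < y -> x <> y -> 0 < t < 1 ->
    g (t * x + (1 - t) * y) < t * g x + (1 - t) * g y.

(* f : R^+ -> R^+ is modelled as f : R -> R; only its values on (0,+oo) matter. *)
Definition strongly_hyperbolic (f : R -> R) : Prop :=
  (forall x, 0 < x -> 0 < f x) /\
  filterlim f (at_right 0) (Rbar_locally p_infty) /\
  filterlim f (Rbar_locally p_infty) (locally 0) /\
  strictly_convex_pos f /\
  (forall b : R, filterlim (fun x => f (x + b) / f x) (Rbar_locally p_infty) (locally 1)) /\
  (forall x, 0 < x -> ex_derive f x) /\
  strictly_convex_pos (fun x => ln (Rabs (Derive f x))).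

Definition fcheck (f : R -> R) (a b c : R) (x : R) : R :=
  a * f (x + b) + c - f x.

Definition in_dom (b x : R) : Prop := Rmax (- b) 0 < x.

Definition is_root (f : R -> R) (a b c x : R) : Prop :=
  in_dom b x /\ fcheck f a b c x = 0.

Definition changes_sign_at (g : R -> R) (x0 : R) : Prop :=
  exists d, 0 < d /\
    ((forall x, x0 - d < x < x0 -> g x < 0) /\ (forall x, x0 < x < x0 + d -> 0 < g x) \/
     (forall x, x0 - d < x < x0 -> 0 < g x) /\ (forall x, x0 < x < x0 + d -> g x < 0)).

(* For c = 0 the roots of fcheck solve f(x+b)/f(x) = 1/a, for b = 0 they solve
   f(x) = c/(1-a); both have at most one solution because f is strictly decreasing
   and the shift ratio f(x+b)/f(x) is strictly increasing for b > 0.  The latter is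
   the positivity of the Wronskian f(x) f'(x+b) - f'(x) f(x+b), which comes from the
   log-convexity of |f'|; the same Wronskian keeps fcheck' away from 0 at a root.
   The limits of f at 0 and at +oo and f(x+b)/f(x) -> 1 show that fcheck takes both
   signs in the four crossing cases and has a constant sign in the other four.
   The case b < 0 reduces to b > 0 through
   fcheck f a b 0 x = - a * fcheck f (/a) (-b) 0 (x + b). *)

From Stdlib Require Import Reals Lra.
From Coquelicot Require Import Coquelicot.
Open Scope R_scope.

Section StrictConvexity.

Variable g : R -> R.
Hypothesis g_convex : strictly_convex_pos g.

Lemma convex_chord_lt p q r : 0 < p -> p < q -> q < r ->
  (r - p) * g q < (r - q) * g p + (q - p) * g r.
Proof.
  intros Hp Hpq Hqr.
  set (t := (r - q) / (r - p)).
  assert (Ht : 0 < t < 1).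
  { unfold t; split.
    - apply Rdiv_lt_0_compat; lra.
    - apply Rlt_div_l; lra. }
  pose proof (g_convex p r t Hp ltac:(lra) ltac:(lra) Ht) as H.
  replace (t * p + (1 - t) * r) with q in H by (unfold t; field; lra).
  replace (r - q) with (t * (r - p)) by (unfold t; field; lra).
  replace (q - p) with ((1 - t) * (r - p)) by (unfold t; field; lra).
  nra.
Qed.

Lemma convex_increment_lt b x z : 0 < b -> 0 < x -> x < z ->
  g (x + b) - g x < g (z + b) - g z.
Proof.
  intros Hb Hx Hxz.
  pose proof (convex_chord_lt x (x + b) (z + b) Hx ltac:(lra) ltac:(lra)) as C1.
  pose proof (convex_chord_lt x z (z + b) Hx Hxz ltac:(lra)) as C2.
  apply (Rmult_lt_reg_l (z + b - x)); nra.
Qed.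

Lemma convex_Derive_le_slope x y : 0 < x -> x < y -> ex_derive g x ->
  Derive g x <= (g y - g x) / (y - x).
Proof.
  intros Hx Hxy Hd.
  set (s := (g y - g x) / (y - x)).
  apply Rnot_lt_le; intros Hs.
  pose proof (proj1 (is_derive_Reals g x _) (Derive_correct g x Hd)) as Hlim.
  destruct (Hlim (Derive g x - s) ltac:(lra)) as [d Hdelta].
  set (h := Rmin (d / 2) ((y - x) / 2)).
  pose proof (cond_pos d).
  assert (Hh1 : h <= d / 2) by apply Rmin_l.
  assert (Hh2 : h <= (y - x) / 2) by apply Rmin_r.
  assert (Hh0 : 0 < h) by (unfold h; apply Rmin_pos; lra).
  specialize (Hdelta h ltac:(lra) ltac:(rewrite Rabs_right; lra)).
  apply Rabs_def2 in Hdelta.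
  assert ((g (x + h) - g x) / h < s).
  { pose proof (convex_chord_lt x (x + h) y Hx ltac:(lra) ltac:(lra)) as C.
    unfold s. apply (Rmult_lt_reg_r (h * (y - x))); [nra|].
    field_simplify; [nra|lra|lra]. }
  lra.
Qed.

End StrictConvexity.

Lemma MVT_closed (g dg : R -> R) x y : x < y ->
  (forall z, x <= z <= y -> is_derive g z (dg z)) ->
  exists c, x <= c <= y /\ g y - g x = dg c * (y - x).
Proof.
  intros Hxy Hd.
  destruct (MVT_gen g x y dg) as [c [Hc E]];
    rewrite ?Rmin_left, ?Rmax_right in * by lra.
  - intros z Hz. apply Hd. lra.
  - intros z Hz. apply continuity_pt_filterlim, (ex_derive_continuous g).
    exists (dg z). now apply Hd.
  - now exists c.
Qed.

Lemma IVT_product (g : R -> R) l u v : (forall x, l < x -> continuity_pt g x) ->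
  l < u -> u < v -> g u * g v < 0 -> exists z, u < z < v /\ g z = 0.
Proof.
  intros Hc Hu Huv Hp.
  assert (Hroot : forall h : R -> R, (forall x, u <= x <= v -> continuity_pt h x) ->
            h u < 0 -> 0 < h v -> exists z, u < z < v /\ h z = 0).
  { intros h Hh Hhu Hhv.
    destruct (Ranalysis5.IVT_interv h u v Hh Huv Hhu Hhv) as [z [Hz Ez]].
    exists z. split; [|exact Ez].
    destruct Hz as [[Hz1|Hz1] [Hz2|Hz2]]; subst; lra. }
  destruct (Rtotal_order (g u) 0) as [Hgu|[Hgu|Hgu]].
  - apply Hroot; [intros x Hx; apply Hc; lra|exact Hgu|nra].
  - rewrite Hgu, Rmult_0_l in Hp. lra.
  - destruct (Hroot (fun x => - g x)) as [z [Hz Ez]]; cbv beta.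
    + intros x Hx. apply continuity_pt_opp, Hc. lra.
    + lra.
    + nra.
    + exists z. split; [exact Hz|lra].
Qed.

Lemma same_sign_of_no_root (g : R -> R) l p q : (forall x, l < x -> continuity_pt g x) ->
  l < p -> l < q -> (forall z, Rmin p q <= z <= Rmax p q -> g z <> 0) ->
  0 < g p * g q.
Proof.
  intros Hc Hp Hq Hz.
  assert (Hgp : g p <> 0) by (apply Hz; split; [apply Rmin_l|apply Rmax_l]).
  assert (Hgq : g q <> 0) by (apply Hz; split; [apply Rmin_r|apply Rmax_r]).
  destruct (Rlt_or_le 0 (g p * g q)) as [H|H]; [exact H|exfalso].
  assert (Hneg : g p * g q < 0).
  { destruct H as [H|H]; [exact H|]. apply Rmult_integral in H. tauto. }
  destruct (Rtotal_order p q) as [Hpq|[Hpq|Hpq]].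
  - destruct (IVT_product g l p q Hc Hp Hpq Hneg) as [z [Hzpq Ez]].
    apply (Hz z); [rewrite Rmin_left, Rmax_right; lra|exact Ez].
  - subst q. nra.
  - rewrite Rmult_comm in Hneg.
    destruct (IVT_product g l q p Hc Hq Hpq Hneg) as [z [Hzpq Ez]].
    apply (Hz z); [rewrite Rmin_right, Rmax_left; lra|exact Ez].
Qed.

Lemma changes_sign_at_unique_root (g : R -> R) l s t :
  (forall x, l < x -> continuity_pt g x) ->
  (forall x y, l < x -> l < y -> g x = 0 -> g y = 0 -> x = y) ->
  l < s -> s < t -> g s * g t < 0 ->
  exists x0, l < x0 /\ g x0 = 0 /\ changes_sign_at g x0.
Proof.
  intros Hc Hu Hs Hst Hp.
  destruct (IVT_product g l s t Hc Hs Hst Hp) as [x0 [Hx0 E]].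
  exists x0. split; [lra|]. split; [exact E|].
  assert (Hsame : forall x y, l < x -> l < y -> (x < x0 /\ y < x0 \/ x0 < x /\ x0 < y) ->
            0 < g x * g y).
  { intros x y Hx Hy Hside. apply (same_sign_of_no_root g l); auto.
    intros z Hz Ez.
    destruct (Rle_or_lt x y);
      [rewrite Rmin_left, Rmax_right in Hz by lra|rewrite Rmin_right, Rmax_left in Hz by lra];
      assert (z = x0) by (apply Hu; auto; lra); lra. }
  exists (x0 - l). split; [lra|].
  assert (Hsign : g s < 0 /\ 0 < g t \/ 0 < g s /\ g t < 0).
  { destruct (Rtotal_order (g s) 0) as [H|[H|H]].
    - left. split; nra.
    - rewrite H, Rmult_0_l in Hp. lra.
    - right. split; nra. }
  destruct Hsign as [[Hgs Hgt]|[Hgs Hgt]]; [left|right]; split; intros x Hx.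
  - pose proof (Hsame x s ltac:(lra) Hs ltac:(lra)). nra.
  - pose proof (Hsame x t ltac:(lra) ltac:(lra) ltac:(lra)). nra.
  - pose proof (Hsame x s ltac:(lra) Hs ltac:(lra)). nra.
  - pose proof (Hsame x t ltac:(lra) ltac:(lra) ltac:(lra)). nra.
Qed.

Lemma eventually_gt_of_lim {T} (F : (T -> Prop) -> Prop) (g : T -> R) (l m : R) :
  filterlim g F (locally l) -> m < l -> F (fun x => m < g x).
Proof. intros H Hm. apply (H (fun u => m < u)). now apply (open_gt m). Qed.

Lemma eventually_lt_of_lim {T} (F : (T -> Prop) -> Prop) (g : T -> R) (l m : R) :
  filterlim g F (locally l) -> l < m -> F (fun x => g x < m).
Proof. intros H Hm. apply (H (fun u => u < m)). now apply (open_lt m). Qed.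

Lemma at_right_witness (P : R -> Prop) : at_right 0 P -> exists s, 0 < s /\ P s.
Proof.
  intros H. apply (Hierarchy.filter_ex (F := at_right 0)).
  apply filter_and; [|exact H]. exists (mkposreal 1 Rlt_0_1). intros y _ Hy. exact Hy.
Qed.

Lemma p_infty_witness (P : R -> Prop) s : Rbar_locally p_infty P -> exists t, s < t /\ P t.
Proof.
  intros [M HM]. exists (Rmax M s + 1).
  pose proof (Rmax_l M s). pose proof (Rmax_r M s).
  split; [|apply HM]; lra.
Qed.

Lemma pos_of_derive_neg_lim_0 (g dg : R -> R) u :
  (forall y, u <= y -> is_derive g y (dg y)) -> dg u <= 0 -> (forall y, u < y -> dg y < 0) ->
  filterlim g (Rbar_locally p_infty) (locally 0) -> 0 < g u.
Proof.
  intros Hd Hu Hneg Hlim.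
  assert (Hdecr : forall y z, u < y -> y < z -> g z < g y).
  { intros y z Hy Hyz.
    destruct (MVT_closed g dg y z Hyz) as [c [Hc E]]; [intros w Hw; apply Hd; lra|].
    pose proof (Hneg c ltac:(lra)). nra. }
  assert (Hstart : g (u + 1) <= g u).
  { destruct (MVT_closed g dg u (u + 1)) as [c [Hc E]]; [lra|intros w Hw; apply Hd; lra|].
    destruct (Req_dec c u) as [->|Hcu]; [nra|].
    pose proof (Hneg c ltac:(lra)). nra. }
  assert (Hpos : 0 < g (u + 1)).
  { apply Rnot_le_lt; intros Hle.
    pose proof (Hdecr (u + 1) (u + 2) ltac:(lra) ltac:(lra)) as H2.
    destruct (p_infty_witness _ (u + 2) (eventually_gt_of_lim _ _ _ (g (u + 2)) Hlim
      ltac:(lra))) as [y [Hy Hgy]].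
    pose proof (Hdecr (u + 2) y ltac:(lra) Hy). lra. }
  lra.
Qed.

Lemma in_dom_iff b x : in_dom b x <-> - b < x /\ 0 < x.
Proof.
  unfold in_dom. split.
  - intros H. pose proof (Rmax_l (- b) 0). pose proof (Rmax_r (- b) 0). lra.
  - intros [H1 H2]. now apply Rmax_lub_lt.
Qed.

Lemma in_dom_reflect b x : in_dom b x <-> in_dom (- b) (x + b).
Proof. rewrite !in_dom_iff. lra. Qed.

Lemma fcheck_lim_0 f a b : filterlim f (Rbar_locally p_infty) (locally 0) ->
  filterlim (fcheck f a b 0) (Rbar_locally p_infty) (locally 0).
Proof.
  intros H.
  assert (Hshift : is_lim (fun y => f (y + b)) p_infty 0).
  { apply (filterlim_comp _ _ _ (fun y => y + b) f _ (Rbar_locally p_infty)); [|exact H].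
    intros P [M HM]. exists (M - b). intros y Hy. apply HM. lra. }
  pose proof (is_lim_minus' _ _ _ _ _
    (is_lim_plus' _ _ _ _ _ (is_lim_scal_l _ a _ _ Hshift) (is_lim_const 0 p_infty)) H) as L.
  replace (a * 0 + 0 - 0) with 0 in L by ring. exact L.
Qed.

Lemma fcheck_reflect f a b x : a <> 0 ->
  fcheck f a b 0 x = - a * fcheck f (/ a) (- b) 0 (x + b).
Proof.
  intros Ha. unfold fcheck. replace (x + b + - b) with x by ring. field. exact Ha.
Qed.

Definition crossing_params (a b c : R) : Prop :=
  (a > 1 /\ b > 0 /\ c = 0) \/ (a > 1 /\ b = 0 /\ c < 0) \/
  (a < 1 /\ b < 0 /\ c = 0) \/ (a < 1 /\ b = 0 /\ c > 0).

Definition rootless_params (a b c : R) : Prop :=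
  (a < 1 /\ b > 0 /\ c = 0) \/ (a < 1 /\ b = 0 /\ c < 0) \/
  (a > 1 /\ b < 0 /\ c = 0) \/ (a > 1 /\ b = 0 /\ c > 0).

Lemma crossing_or_rootless a b c : a <> 1 ->
  ((b <> 0 /\ c = 0) \/ (b = 0 /\ c <> 0)) ->
  crossing_params a b c \/ rootless_params a b c.
Proof.
  intros Ha1 [[Hb ->]|[-> Hc]]; unfold crossing_params, rootless_params;
    destruct (Rtotal_order a 1) as [Ha|[Ha|Ha]]; try contradiction.
  1, 2: destruct (Rtotal_order b 0) as [Hb'|[Hb'|Hb']]; [tauto|contradiction|tauto].
  1, 2: destruct (Rtotal_order c 0) as [Hc'|[Hc'|Hc']]; [tauto|contradiction|tauto].
Qed.

Lemma crossing_not_rootless a b c : crossing_params a b c -> ~ rootless_params a b c.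
Proof. unfold crossing_params, rootless_params. intros Hcross Hnone. lra. Qed.

Definition shift_ratio (f : R -> R) (b x : R) : R := f (x + b) / f x.

Definition shift_wronskian (f : R -> R) (b x : R) : R :=
  f x * Derive f (x + b) - Derive f x * f (x + b).

Section StronglyHyperbolic.

Variable f : R -> R.
Hypothesis Hf : strongly_hyperbolic f.

Lemma sh_pos x : 0 < x -> 0 < f x.
Proof. apply Hf. Qed.

Lemma sh_lim_infty : filterlim f (Rbar_locally p_infty) (locally 0).
Proof. apply Hf. Qed.

Lemma sh_unbounded_at_0 M : exists s, 0 < s /\ M < f s.
Proof.
  apply at_right_witness. destruct Hf as (_ & H0 & _).
  apply H0. now exists M.
Qed.

Lemma sh_decreasing x y : 0 < x -> x < y -> f y < f x.
Proof.
  intros Hx Hxy.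
  apply Rnot_le_lt; intros Hle.
  assert (Hgrow : forall z, y < z -> f y < f z).
  { intros z Hz. destruct Hf as (_ & _ & _ & Hc & _).
    pose proof (convex_chord_lt f Hc x y z Hx Hxy Hz). nra. }
  destruct (p_infty_witness _ y
    (eventually_lt_of_lim _ _ _ (f y) sh_lim_infty (sh_pos y ltac:(lra))))
    as [z [Hz Hfz]].
  specialize (Hgrow z Hz). lra.
Qed.

Lemma sh_injective x y : 0 < x -> 0 < y -> f x = f y -> x = y.
Proof.
  intros Hx Hy E. destruct (Rtotal_order x y) as [H|[H|H]]; [|exact H|].
  - pose proof (sh_decreasing x y Hx H). lra.
  - pose proof (sh_decreasing y x Hy H). lra.
Qed.

Lemma sh_Derive_neg x : 0 < x -> Derive f x < 0.
Proof.
  intros Hx. destruct Hf as (_ & _ & _ & Hc & _ & Hd & _).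
  pose proof (convex_Derive_le_slope f Hc x (x + 1) Hx ltac:(lra) (Hd x Hx)).
  pose proof (sh_decreasing x (x + 1) Hx ltac:(lra)).
  replace (x + 1 - x) with 1 in * by ring. lra.
Qed.

Lemma sh_Derive_shift_cross_lt b x z : 0 < b -> 0 < x -> x < z ->
  Derive f (x + b) * Derive f z < Derive f (z + b) * Derive f x.
Proof.
  intros Hb Hx Hxz.
  pose proof (sh_Derive_neg x Hx). pose proof (sh_Derive_neg z ltac:(lra)).
  pose proof (sh_Derive_neg (x + b) ltac:(lra)).
  pose proof (sh_Derive_neg (z + b) ltac:(lra)).
  destruct Hf as (_ & _ & _ & _ & _ & _ & Hc).
  pose proof (convex_increment_lt _ Hc b x z Hb Hx Hxz) as C. cbv beta in C.
  rewrite !Rabs_left, <- !ln_div in C by lra.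
  apply ln_lt_inv in C; [|apply Rdiv_lt_0_compat; lra|apply Rdiv_lt_0_compat; lra].
  apply (Rmult_lt_compat_r (Derive f x * Derive f z)) in C; [|nra].
  replace (- Derive f (x + b) / - Derive f x * (Derive f x * Derive f z))
    with (Derive f (x + b) * Derive f z) in C by (field; lra).
  replace (- Derive f (z + b) / - Derive f z * (Derive f x * Derive f z))
    with (Derive f (z + b) * Derive f x) in C by (field; lra).
  exact C.
Qed.

Lemma sh_is_derive_fcheck a b c x : in_dom b x ->
  is_derive (fcheck f a b c) x (a * Derive f (x + b) - Derive f x).
Proof.
  intros Hx. apply in_dom_iff in Hx.
  destruct Hf as (_ & _ & _ & _ & _ & Hd & _).
  unfold fcheck. auto_derive; repeat split; try (apply Hd; lra).
  change (fun y : R => f y) with f. ring.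
Qed.

Lemma sh_fcheck_continuous a b c x : in_dom b x -> continuity_pt (fcheck f a b c) x.
Proof.
  intros Hx. apply continuity_pt_filterlim, (ex_derive_continuous (fcheck f a b c)).
  eexists. now apply sh_is_derive_fcheck.
Qed.

Lemma shift_wronskian_pos b x : 0 < b -> 0 < x -> 0 < shift_wronskian f b x.
Proof.
  intros Hb Hx.
  pose proof (sh_Derive_neg x Hx) as Hdx.
  pose proof (sh_Derive_neg (x + b) ltac:(lra)) as Hdxb.
  (* With this [a], fcheck' vanishes at [x] and, by log-convexity of |f'|, is
     negative beyond [x]; as fcheck tends to 0, fcheck x > 0. *)
  set (a := Derive f x / Derive f (x + b)).
  assert (Hcheck : 0 < fcheck f a b 0 x).
  { apply (pos_of_derive_neg_lim_0 _ (fun t => a * Derive f (t + b) - Derive f t)).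
    - intros y Hy. apply sh_is_derive_fcheck, in_dom_iff. lra.
    - unfold a. right. field. lra.
    - intros y Hy.
      pose proof (sh_Derive_shift_cross_lt b x y Hb Hx Hy).
      pose proof (sh_Derive_neg y ltac:(lra)).
      cbv beta.
      replace (a * Derive f (y + b) - Derive f y) with
        ((Derive f x * Derive f (y + b) - Derive f (x + b) * Derive f y) / Derive f (x + b))
        by (unfold a; field; lra).
      pose proof (Rinv_lt_0_compat _ Hdxb). unfold Rdiv. nra.
    - apply fcheck_lim_0, sh_lim_infty. }
  replace (shift_wronskian f b x) with (- Derive f (x + b) * fcheck f a b 0 x)
    by (unfold shift_wronskian, fcheck, a; field; lra).
  apply Rmult_lt_0_compat; lra.
Qed.

Lemma is_derive_shift_ratio b x : 0 < x -> 0 < x + b ->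
  is_derive (shift_ratio f b) x (shift_wronskian f b x / f x ^ 2).
Proof.
  intros Hx Hxb.
  pose proof (sh_pos x Hx).
  destruct Hf as (_ & _ & _ & _ & _ & Hd & _).
  unfold shift_ratio, shift_wronskian.
  auto_derive; repeat split; try (apply Hd; lra); try lra.
  change (fun y : R => f y) with f. field. lra.
Qed.

Lemma shift_ratio_increasing b x y : 0 < b -> 0 < x -> x < y ->
  shift_ratio f b x < shift_ratio f b y.
Proof.
  intros Hb Hx Hxy.
  apply (incr_function _ 0 p_infty (fun t => shift_wronskian f b t / f t ^ 2));
    [| |exact Hx|exact Hxy|exact I]; intros t Ht _; simpl in Ht.
  - apply is_derive_shift_ratio; lra.
  - apply Rdiv_lt_0_compat.
    + now apply shift_wronskian_pos.
    + apply pow_lt, sh_pos, Ht.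
Qed.

Lemma shift_ratio_reflect b x : 0 < x -> 0 < x + b ->
  shift_ratio f b x = / shift_ratio f (- b) (x + b).
Proof.
  intros Hx Hxb. pose proof (sh_pos x Hx). pose proof (sh_pos (x + b) Hxb).
  unfold shift_ratio. replace (x + b + - b) with x by ring. field. lra.
Qed.

Lemma shift_ratio_injective b x y : b <> 0 -> in_dom b x -> in_dom b y ->
  shift_ratio f b x = shift_ratio f b y -> x = y.
Proof.
  assert (Hpos : forall b x y, 0 < b -> 0 < x -> 0 < y ->
            shift_ratio f b x = shift_ratio f b y -> x = y).
  { intros b' x' y' Hb Hx Hy E. destruct (Rtotal_order x' y') as [H|[H|H]]; [|exact H|].
    - pose proof (shift_ratio_increasing b' x' y' Hb Hx H). lra.
    - pose proof (shift_ratio_increasing b' y' x' Hb Hy H). lra. }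
  intros Hb Hx Hy E. apply in_dom_iff in Hx, Hy.
  destruct (Rtotal_order b 0) as [Hneg|[H0|Hbpos]]; [|contradiction|].
  - rewrite (shift_ratio_reflect b x), (shift_ratio_reflect b y) in E by lra.
    apply Rinv_eq_reg in E.
    assert (x + b = y + b) by (apply (Hpos (- b)); lra). lra.
  - apply (Hpos b); lra.
Qed.

Lemma shift_wronskian_neq0 b x : b <> 0 -> in_dom b x -> shift_wronskian f b x <> 0.
Proof.
  intros Hb Hx. apply in_dom_iff in Hx.
  destruct (Rtotal_order b 0) as [Hneg|[H0|Hbpos]]; [|contradiction|].
  - replace (shift_wronskian f b x) with (- shift_wronskian f (- b) (x + b)).
    + pose proof (shift_wronskian_pos (- b) (x + b) ltac:(lra) ltac:(lra)). lra.
    + unfold shift_wronskian. replace (x + b + - b) with x by ring. ring.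
  - pose proof (shift_wronskian_pos b x Hbpos ltac:(lra)). lra.
Qed.

Lemma fcheck_root_unique a b c : 0 < a -> a <> 1 ->
  ((b <> 0 /\ c = 0) \/ (b = 0 /\ c <> 0)) ->
  forall x y, is_root f a b c x -> is_root f a b c y -> x = y.
Proof.
  intros Ha Ha1 Hbc x y [Dx Ex] [Dy Ey].
  pose proof (proj1 (in_dom_iff b x) Dx). pose proof (proj1 (in_dom_iff b y) Dy).
  unfold fcheck in Ex, Ey.
  destruct Hbc as [[Hb ->]|[-> Hc]].
  - assert (Hratio : forall z, 0 < z -> a * f (z + b) + 0 - f z = 0 ->
              shift_ratio f b z = / a).
    { intros z Hz Ez. pose proof (sh_pos z Hz). unfold shift_ratio. field_simplify_eq; lra. }
    apply (shift_ratio_injective b x y Hb Dx Dy).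
    rewrite (Hratio x), (Hratio y); auto; lra.
  - rewrite Rplus_0_r in Ex, Ey. apply sh_injective; try lra.
    apply (Rmult_eq_reg_l (a - 1)); lra.
Qed.

Lemma fcheck_Derive_neq0_at_root a b c x : a <> 1 ->
  ((b <> 0 /\ c = 0) \/ (b = 0 /\ c <> 0)) -> is_root f a b c x ->
  ex_derive (fcheck f a b c) x /\ Derive (fcheck f a b c) x <> 0.
Proof.
  intros Ha1 Hbc [Dx Ex].
  pose proof (sh_is_derive_fcheck a b c x Dx) as HD.
  split; [now exists (a * Derive f (x + b) - Derive f x)|].
  rewrite (is_derive_unique _ _ _ HD). intros Z.
  unfold fcheck in Ex.
  destruct Hbc as [[Hb ->]|[-> Hc]].
  - apply (shift_wronskian_neq0 b x Hb Dx). unfold shift_wronskian.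
    replace (f x) with (a * f (x + b)) by lra.
    replace (Derive f x) with (a * Derive f (x + b)) by lra. ring.
  - rewrite Rplus_0_r in Z.
    apply in_dom_iff in Dx. pose proof (sh_Derive_neg x (proj2 Dx)).
    assert (Hz : (a - 1) * Derive f x = 0) by lra.
    apply Rmult_integral in Hz. destruct Hz; lra.
Qed.

Lemma fcheck_opposite_signs_const a c : (a - 1) * c < 0 ->
  exists s t, in_dom 0 s /\ s < t /\ fcheck f a 0 c s * fcheck f a 0 c t < 0.
Proof.
  intros Hac.
  assert (Ha1 : a - 1 <> 0) by (intros E; rewrite E in Hac; lra).
  set (v := - c / (a - 1)).
  assert (Hv : 0 < v).
  { unfold v. destruct (Rtotal_order (a - 1) 0) as [H|[H|H]]; [|contradiction|].
    - replace (- c / (a - 1)) with (c / - (a - 1)) by (field; exact Ha1).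
      apply Rdiv_lt_0_compat; nra.
    - apply Rdiv_lt_0_compat; nra. }
  assert (Hform : forall x, fcheck f a 0 c x = (a - 1) * (f x - v)).
  { intros x. unfold fcheck, v. rewrite Rplus_0_r. field. exact Ha1. }
  destruct (sh_unbounded_at_0 v) as [s [Hs Hfs]].
  destruct (p_infty_witness _ s (eventually_lt_of_lim _ _ _ v sh_lim_infty Hv))
    as [t [Hst Hft]].
  exists s, t. split; [apply in_dom_iff; lra|]. split; [exact Hst|].
  rewrite !Hform.
  pose proof (Rsqr_pos_lt _ Ha1). unfold Rsqr in *.
  assert ((f s - v) * (f t - v) < 0) by nra.
  replace ((a - 1) * (f s - v) * ((a - 1) * (f t - v)))
    with ((a - 1) * (a - 1) * ((f s - v) * (f t - v))) by ring.
  nra.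
Qed.

Lemma fcheck_opposite_signs_shift a b : 1 < a -> 0 < b ->
  exists s t, in_dom b s /\ s < t /\ fcheck f a b 0 s * fcheck f a b 0 t < 0.
Proof.
  intros Ha Hb.
  assert (Hinv : / a < 1) by (rewrite <- Rinv_1; apply Rinv_lt_contravar; lra).
  destruct (sh_unbounded_at_0 (a * f b)) as [s [Hs Hfs]].
  destruct Hf as (_ & _ & _ & _ & Hlim & _).
  destruct (p_infty_witness _ s (eventually_gt_of_lim _ _ _ (/ a) (Hlim b) Hinv))
    as [t [Hst Ht]].
  exists s, t. split; [apply in_dom_iff; lra|]. split; [exact Hst|].
  assert (Hs_neg : fcheck f a b 0 s < 0).
  { pose proof (sh_decreasing b (s + b) Hb ltac:(lra)). unfold fcheck. nra. }
  assert (Ht_pos : 0 < fcheck f a b 0 t).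
  { pose proof (sh_pos t ltac:(lra)).
    replace (fcheck f a b 0 t) with (f t * (a * (f (t + b) / f t) - 1))
      by (unfold fcheck; field; lra).
    apply Rmult_lt_0_compat; [lra|].
    apply (Rmult_lt_compat_l a) in Ht; [|lra]. rewrite Rinv_r in Ht; lra. }
  nra.
Qed.

Lemma fcheck_opposite_signs a b c : 0 < a -> crossing_params a b c ->
  exists s t, in_dom b s /\ s < t /\ fcheck f a b c s * fcheck f a b c t < 0.
Proof.
  intros Ha [[Ha1 [Hb ->]]|[[Ha1 [-> Hc]]|[[Ha1 [Hb ->]]|[Ha1 [-> Hc]]]]].
  - now apply fcheck_opposite_signs_shift.
  - apply fcheck_opposite_signs_const. nra.
  - assert (Hinv : 1 < / a) by (rewrite <- Rinv_1; apply Rinv_lt_contravar; lra).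
    destruct (fcheck_opposite_signs_shift (/ a) (- b) Hinv ltac:(lra))
      as [s [t [Hs [Hst Hp]]]].
    exists (s - b), (t - b).
    rewrite in_dom_reflect, !(fcheck_reflect f a b) by lra.
    replace (s - b + b) with s by ring. replace (t - b + b) with t by ring.
    split; [exact Hs|]. split; [lra|].
    pose proof (Rmult_lt_0_compat a a Ha Ha). nra.
  - apply fcheck_opposite_signs_const. nra.
Qed.

Lemma fcheck_no_root a b c : 0 < a -> rootless_params a b c ->
  forall x, ~ is_root f a b c x.
Proof.
  intros Ha Hp x [Dx Ex]. apply in_dom_iff in Dx. unfold fcheck in Ex.
  destruct Hp as [[Ha1 [Hb ->]]|[[Ha1 [-> Hc]]|[[Ha1 [Hb ->]]|[Ha1 [-> Hc]]]]];
    rewrite ?Rplus_0_r in Ex.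
  - pose proof (sh_decreasing x (x + b) ltac:(lra) ltac:(lra)).
    pose proof (sh_pos (x + b) ltac:(lra)). nra.
  - pose proof (sh_pos x ltac:(lra)). nra.
  - pose proof (sh_decreasing (x + b) x ltac:(lra) ltac:(lra)).
    pose proof (sh_pos (x + b) ltac:(lra)). nra.
  - pose proof (sh_pos x ltac:(lra)). nra.
Qed.

Lemma fcheck_crossing_root a b c : 0 < a -> a <> 1 ->
  ((b <> 0 /\ c = 0) \/ (b = 0 /\ c <> 0)) -> crossing_params a b c ->
  exists x0, is_root f a b c x0 /\
    (forall y, is_root f a b c y -> y = x0) /\
    changes_sign_at (fcheck f a b c) x0 /\
    ex_derive (fcheck f a b c) x0 /\ Derive (fcheck f a b c) x0 <> 0.
Proof.
  intros Ha Ha1 Hbc Hcross.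
  pose proof (fcheck_root_unique a b c Ha Ha1 Hbc) as Huniq.
  destruct (fcheck_opposite_signs a b c Ha Hcross) as [s [t [Hs [Hst Hp]]]].
  destruct (changes_sign_at_unique_root (fcheck f a b c) (Rmax (- b) 0) s t)
    as [x0 [Hx0 [E Hsign]]]; auto.
  - intros x Hx. now apply sh_fcheck_continuous.
  - intros x y Hx Hy Ex Ey. now apply Huniq.
  - assert (Hroot : is_root f a b c x0) by now split.
    exists x0. split; [exact Hroot|]. split; [intros y Hy; now apply Huniq|].
    split; [exact Hsign|]. now apply fcheck_Derive_neq0_at_root.
Qed.

End StronglyHyperbolic.

Theorem lemma3p4 (f : R -> R) (a b c : R) :
  strongly_hyperbolic f -> 0 < a -> a <> 1 ->
  ((b <> 0 /\ c = 0) \/ (b = 0 /\ c <> 0)) ->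
  (forall x y, is_root f a b c x -> is_root f a b c y -> x = y) /\
  (let S1 :=
     (exists x0, is_root f a b c x0 /\
        (forall y, is_root f a b c y -> y = x0) /\
        changes_sign_at (fcheck f a b c) x0 /\
        ex_derive (fcheck f a b c) x0 /\ Derive (fcheck f a b c) x0 <> 0) /\
     ((a > 1 /\ b > 0 /\ c = 0) \/ (a > 1 /\ b = 0 /\ c < 0) \/
      (a < 1 /\ b < 0 /\ c = 0) \/ (a < 1 /\ b = 0 /\ c > 0)) in
   let S2 :=
     (forall x, ~ is_root f a b c x) /\
     ((a < 1 /\ b > 0 /\ c = 0) \/ (a < 1 /\ b = 0 /\ c < 0) \/
      (a > 1 /\ b < 0 /\ c = 0) \/ (a > 1 /\ b = 0 /\ c > 0)) in
   (S1 /\ ~ S2) \/ (~ S1 /\ S2)).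
Proof.
  intros Hf Ha Ha1 Hbc.
  split; [exact (fcheck_root_unique f Hf a b c Ha Ha1 Hbc)|].
  cbv zeta. fold (crossing_params a b c) (rootless_params a b c).
  destruct (crossing_or_rootless a b c Ha1 Hbc) as [Hcross|Hnone].
  - left. split.
    + split; [exact (fcheck_crossing_root f Hf a b c Ha Ha1 Hbc Hcross)|exact Hcross].
    + intros [_ Hnone]. exact (crossing_not_rootless a b c Hcross Hnone).
  - right. split.
    + intros [_ Hcross]. exact (crossing_not_rootless a b c Hcross Hnone).
    + split; [exact (fcheck_no_root f Hf a b c Ha Hnone)|exact Hnone].
Qed.
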